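(* Let $G=(V,E)$ be an $\alpha$-expander, let $\lambda\in(0,1)$, and let $\mathbf d\in\mathbb Z^V$ be the current discrepancy vector of the expander greedy process on $G$ at some time step $t$. Consider the $(1+\beta)$-process on vertex set $V$ with $\beta=\alpha$ and weights $w_v=\deg_G(v)$ for $v\in V$, started from the same discrepancy vector $\mathbf d$. Then (a) $\Delta_{-1}(\mathbf d)\le\widetilde\Delta_{-1}(\mathbf d)$ and (b) $\Delta_{+1}(\mathbf d)\le\widetilde\Delta_{+1}(\mathbf d)$. Hence the expected one-step change of the potential in the expander greedy process satisfies $\mathbb E[\Phi(\mathbf d^{t+1})-\Phi(\mathbf d)]\le \widetilde\Delta_{-1}(\mathbf d)+\widetilde\Delta_{+1}(\mathbf d)$, where $\mathbf d^{t+1}$ is the discrepancy vector after the next step.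
   Context: $\mathrm{vol}(S)=\sum_{v\in S}\deg(v)$; $G$ is an $\alpha$-expander if for every $S\subseteq V$, $|E(S,V\setminus S)|\ge\alpha\min\{\mathrm{vol}(S),\mathrm{vol}(V\setminus S)\}$. Expander greedy process: discrepancies $d_v$ (in-degree minus out-degree among arrived edges); at each step a uniformly random edge $\{i,j\}\in E$ arrives independently, and if $d_i\ge d_j$ (ties arbitrary) it is oriented $i\to j$, so $d_i$ decreases by $1$ and $d_j$ increases by $1$. Potential: $\Phi(\mathbf d)=\sum_{v\in V}\cosh(\lambda d_v)$. With $i$ the endpoint of the arriving edge of larger discrepancy and $j$ the other: $\Delta_{-1}(\mathbf d)=\mathbb E_{\{i,j\}\sim E}[\cosh(\lambda(d_i-1))-\cosh(\lambda d_i)]$ and $\Delta_{+1}(\mathbf d)=\mathbb E_{\{i,j\}\sim E}[\cosh(\lambda(d_j+1))-\cosh(\lambda d_j)]$. The $(1+\beta)$-process with weights $w\ge 0$: two vertices $u,v$ are sampled independently, each equal to $x\in V$ with probability $w_x/\sum_{y}w_y$, and the vector $\chi_u-\chi_v$ is signed: with probability $1-\beta$ uniformly at random (so each of $u,v$ is equally likely to be the vertex receiving $+1$, the other receiving $-1$), and with probability $\beta$ greedily (the one of $u,v$ with higher discrepancy receives $-1$, the other $+1$). Let $a$ denote the vertex receiving $+1$ and $b$ the vertex receiving $-1$. Then $\widetilde\Delta_{+1}(\mathbf d)=\mathbb E[\cosh(\lambda(d_a+1))-\cosh(\lambda d_a)]$ and $\widetilde\Delta_{-1}(\mathbf d)=\mathbb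 E[\cosh(\lambda(d_b-1))-\cosh(\lambda d_b)]$, the expectations being over the sampling of $u,v$ and the signing. *)

From HB Require Import structures.
From mathcomp Require Import all_boot all_order all_algebra.
From mathcomp Require Import all_classical all_reals all_analysis.
Set Implicit Arguments. Unset Strict Implicit. Unset Printing Implicit Defensive.
Import Order.TTheory GRing.Theory Num.Theory.
Local Open Scope ring_scope.

Section Defs.
Variables (R : realType) (V : finType).

Definition coshR (x : R) : R := (expR x + expR (- x)) / 2.

Definition simple_graph (e : rel V) : Prop :=
  (forall x y, e x y = e y x) /\ (forall x, ~~ e x x).

Definition deg (e : rel V) (v : V) : R := (#|[set y | e v y]|)%:R.
Definition vol (e : rel V) (S : {set V}) : R := \sum_(v in S) deg e v.
(* |E(S, V \ S)| : each cut edge counted once, by its endpoint in S *)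
Definition cut_size (e : rel V) (S : {set V}) : R :=
  (#|[set p : V * V | [&& e p.1 p.2, p.1 \in S & p.2 \notin S]]|)%:R.

Definition expander (e : rel V) (alpha : R) : Prop :=
  forall S : {set V}, alpha * Num.min (vol e S) (vol e (~: S)) <= cut_size e S.

(* uniform random edge {i,j} of E: average over the 2|E| arcs (x,y) with e x y;
   each edge corresponds to exactly two arcs *)
Definition edge_mean (e : rel V) (F : V -> V -> R) : R :=
  (\sum_(p : V * V | e p.1 p.2) F p.1 p.2) / (#|[set p : V * V | e p.1 p.2]|)%:R.

Definition ch (lam : R) (z : int) : R := coshR (lam * z%:~R).

(* endpoint of larger discrepancy (ties: the first component of the arc) *)
Definition hi (d : V -> int) (x y : V) : V := if d y <= d x then x else y.
Definition lo (d : V -> int) (x y : V) : V := if d y <= d x then y else x.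

Definition Delta_m1 (e : rel V) (lam : R) (d : V -> int) : R :=
  edge_mean e (fun x y => ch lam (d (hi d x y) - 1) - ch lam (d (hi d x y))).
Definition Delta_p1 (e : rel V) (lam : R) (d : V -> int) : R :=
  edge_mean e (fun x y => ch lam (d (lo d x y) + 1) - ch lam (d (lo d x y))).

(* (1+beta)-process with weights w: u,v independent, P(u=x) = w x / sum w.
   With prob. 1-beta the sign is uniform (b = u or b = v w.p. 1/2 each),
   with prob. beta greedy (b = the one of higher discrepancy, a the other). *)
Definition wprob (w : V -> R) (x : V) : R := w x / \sum_(y : V) w y.

Definition tDelta_m1 (w : V -> R) (beta lam : R) (d : V -> int) : R :=
  \sum_(u : V) \sum_(v : V) wprob w u * wprob w v *
    ((1 - beta) / 2 * ((ch lam (d u - 1) - ch lam (d u)) + (ch lam (d v - 1) - ch lam (d v)))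
     + beta * (ch lam (d (hi d u v) - 1) - ch lam (d (hi d u v))) ).
Definition tDelta_p1 (w : V -> R) (beta lam : R) (d : V -> int) : R :=
  \sum_(u : V) \sum_(v : V) wprob w u * wprob w v *
    ((1 - beta) / 2 * ((ch lam (d v + 1) - ch lam (d v)) + (ch lam (d u + 1) - ch lam (d u)))
     + beta * (ch lam (d (lo d u v) + 1) - ch lam (d (lo d u v))) ).

Definition Phi (lam : R) (d : V -> int) : R := \sum_(v : V) ch lam (d v).

Definition step (d : V -> int) (x y : V) : V -> int :=
  fun v => d v - (v == hi d x y)%:Z + (v == lo d x y)%:Z.

Definition expected_change (e : rel V) (lam : R) (d : V -> int) : R :=
  edge_mean e (fun x y => Phi lam (step d x y) - Phi lam d).

(* discrepancy vectors reachable by the expander greedy process from 0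
   (both arcs of an edge are allowed, so ties are broken arbitrarily) *)
Inductive reachable (e : rel V) : (V -> int) -> Prop :=
| reach0 : reachable e (fun _ => 0)
| reachS d x y : reachable e d -> e x y -> reachable e (step d x y).

End Defs.

Arguments deg {R V} e v.
Arguments vol {R V} e S.
Arguments cut_size {R V} e S.

From HB Require Import structures.
From mathcomp Require Import all_boot all_order all_algebra.
From mathcomp Require Import all_classical all_reals all_analysis.
From mathcomp Require Import zify ring lra.
Import Order.TTheory GRing.Theory Num.Theory.
Set Implicit Arguments.
Unset Strict Implicit.
Unset Printing Implicit Defensive.
Local Open Scope ring_scope.

(* Let f z = cosh(lam (z - 1)) - cosh(lam z) and g z = cosh(lam (z + 1)) - cosh(lam z).
   By convexity of cosh, f is nonincreasing and g nondecreasing, so the greedy -1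
   (resp. +1) lands on the endpoint minimising H = f o d (resp. g o d): both Deltas
   are edge averages of min (H x) (H y) = (H x + H y) / 2 - |H x - H y| / 2, and both
   tilde-Deltas are the pi x pi averages (pi proportional to deg) of
   (H u + H v) / 2 - beta |H u - H v| / 2.  An endpoint of a uniform edge is
   pi-distributed, so the linear parts agree and it remains to show the L1 Poincare
   inequality  alpha E_{pi x pi} |H u - H v| <= E_edge |H x - H y|.  Writing
   |H u - H v| as a nonnegative combination of indicators of the integer level sets
   {d > t} of d (coarea), it suffices to treat an indicator of a set S, where it is
   alpha vol(S) vol(~S) / vol(V) <= alpha min(vol S, vol ~S) <= |E(S, ~S)|.
   Finally a greedy step changes the potential only at the two endpoints, so the
   expected change is Delta_m1 + Delta_p1. *)

Section Cosh.
Variable R : realType.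

Lemma chNl (lam : R) (z : int) : ch (- lam) z = ch lam z.
Proof. by rewrite /ch /coshR mulNr opprK addrC. Qed.

Lemma ch_increment_homo (lam : R) :
  {homo (fun z : int => ch lam (z + 1) - ch lam z) : a b / a <= b}.
Proof.
wlog lam_ge0 : lam / 0 <= lam.
  move=> hw; have [/hw //|lam_lt0 a b ab] := lerP 0 lam.
  by rewrite /= -!(chNl lam); apply: hw; rewrite // oppr_ge0 ltW.
have incrE z : ch lam (z + 1) - ch lam z =
    ((expR lam - 1) * expR (lam * z%:~R)
     + (expR (- lam) - 1) * expR (- (lam * z%:~R))) / 2.
  by rewrite /ch /coshR intrD mulrDr mulr1 opprD !expRD; field.
have lam_mono : {homo (fun z : int => lam * z%:~R) : a b / a <= b}.
  by move=> a b ab; rewrite ler_wpM2l // ler_int.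
move=> a b ab /=; rewrite (incrE a) (incrE b) ler_pM2r // lerD //.
  apply: ler_wpM2l; first by rewrite subr_ge0 -expR0 ler_expR.
  by rewrite ler_expR lam_mono.
apply: ler_wnM2l; first by rewrite subr_le0 expR_le1 oppr_le0.
by rewrite ler_expR lerN2 lam_mono.
Qed.

Lemma ch_decrement_anti (lam : R) :
  {homo (fun z : int => ch lam (z - 1) - ch lam z) : a b /~ a <= b}.
Proof.
have decE z : ch lam (z - 1) - ch lam z = - (ch lam (z - 1 + 1) - ch lam (z - 1)).
  by rewrite subrK opprB.
move=> a b ab /=; rewrite (decE a) (decE b) lerN2.
by apply: ch_increment_homo; rewrite lerD2r.
Qed.
End Cosh.

Section Coarea.
Variables (R : realType) (K : int -> R).

Lemma sum_levels_below (lo a : int) (N : nat) : lo <= a <= lo + N%:Z ->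
  \sum_(k < N) (lo + k%:Z < a)%R%:R * (K (lo + k.+1%:Z) - K (lo + k%:Z)) = K a - K lo.
Proof.
move=> a_in; pose n := `|a - lo|%N.
have aE : a = lo + n%:Z by lia.
have nN : (n <= N)%N by lia.
transitivity (\sum_(k < N | (k < n)%N) (K (lo + k.+1%:Z) - K (lo + k%:Z))).
  rewrite [RHS]big_mkcond; apply: eq_bigr => k _.
  by rewrite aE ltrD2l ltz_nat; case: ifP; rewrite ?mul1r ?mul0r.
rewrite -(big_ord_widen _ (fun k => K (lo + k.+1%:Z) - K (lo + k%:Z))) //.
rewrite -(big_mkord xpredT (fun k => K (lo + k.+1%:Z) - K (lo + k%:Z))).
by rewrite telescope_sumr // addr0 aE.
Qed.

Lemma coarea_int (lo : int) (N : nat) (a b : int) :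
  {homo K : x y / x <= y} ->
  lo <= a <= lo + N%:Z -> lo <= b <= lo + N%:Z ->
  `|K a - K b| = \sum_(k < N)
     ((lo + k%:Z < a) != (lo + k%:Z < b))%R%:R * (K (lo + k.+1%:Z) - K (lo + k%:Z)).
Proof.
move=> K_homo; wlog ab : a b / a <= b.
  move=> hw a_in b_in; have [/hw|/ltW ba] := lerP a b; first exact.
  by rewrite distrC hw //; apply: eq_bigr => k _; rewrite eq_sym.
move=> a_in b_in; rewrite distrC ger0_norm ?subr_ge0 ?K_homo //.
rewrite -(subrKA (K lo) (K b) (- K a)) -[K lo - K a]opprB.
rewrite -(sum_levels_below a_in) -(sum_levels_below b_in) -sumrB.
apply: eq_bigr => k _; rewrite -mulrBl; congr (_ * _).
case: ltrP => kb; case: ltrP => ka; rewrite /= ?subrr ?subr0 //.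
by exfalso; lia.
Qed.
End Coarea.

Section PairMean.
Variables (R : realType) (V : finType) (w : V -> R).

Definition pair_mean (G : V -> V -> R) : R :=
  \sum_u \sum_v wprob w u * wprob w v * G u v.

Lemma eq_pair_mean (G G' : V -> V -> R) :
  (forall u v, G u v = G' u v) -> pair_mean G = pair_mean G'.
Proof. by move=> GG'; apply: eq_bigr => u _; apply: eq_bigr => v _; rewrite GG'. Qed.

Lemma pair_meanD (G G' : V -> V -> R) :
  pair_mean (fun u v => G u v + G' u v) = pair_mean G + pair_mean G'.
Proof.
rewrite -big_split; apply: eq_bigr => u _.
by rewrite -big_split; apply: eq_bigr => v _; rewrite mulrDr.
Qed.

Lemma pair_meanZ (c : R) (G : V -> V -> R) :
  pair_mean (fun u v => c * G u v) = c * pair_mean G.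
Proof.
rewrite mulr_sumr; apply: eq_bigr => u _.
by rewrite mulr_sumr; apply: eq_bigr => v _; rewrite mulrCA.
Qed.

Lemma pair_mean_sum (I : finType) (G : I -> V -> V -> R) :
  pair_mean (fun u v => \sum_i G i u v) = \sum_i pair_mean (G i).
Proof.
rewrite exchange_big; apply: eq_bigr => u _.
by rewrite exchange_big; apply: eq_bigr => v _; rewrite mulr_sumr.
Qed.

Lemma sum_wprob : \sum_x w x != 0 -> \sum_x wprob w x = 1.
Proof. by move=> w_neq0; rewrite -mulr_suml mulfV. Qed.

Lemma pair_mean_avg (H : V -> R) : \sum_x w x != 0 ->
  pair_mean (fun u v => (H u + H v) / 2) = \sum_x wprob w x * H x.
Proof.
move=> /sum_wprob wprob1.
have fstE : pair_mean (fun u v => H u) = \sum_x wprob w x * H x.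
  apply: eq_bigr => u _; rewrite -[RHS]mulr1 -wprob1 mulr_sumr.
  by apply: eq_bigr => v _; rewrite mulrAC.
have sndE : pair_mean (fun u v => H v) = pair_mean (fun u v => H u).
  rewrite /pair_mean exchange_big; apply: eq_bigr => u _.
  by apply: eq_bigr => v _; rewrite (mulrC (wprob w v)).
rewrite (@eq_pair_mean _ (fun u v => 2^-1 * H u + 2^-1 * H v)).
  by rewrite pair_meanD !pair_meanZ sndE fstE; lra.
by move=> u v; lra.
Qed.

Lemma pair_mean_sep (S : {set V}) :
  pair_mean (fun u v => ((u \in S) != (v \in S))%:R)
  = 2 * ((\sum_(u in S) wprob w u) * \sum_(u in ~: S) wprob w u).
Proof.
set pS := \sum_(u in S) _; set pSc := \sum_(u in ~: S) _.
have innerE u : \sum_v wprob w u * wprob w v * ((u \in S) != (v \in S))%:R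
    = wprob w u * (if u \in S then pSc else pS).
  rewrite /pS /pSc; case: (u \in S); rewrite mulr_sumr [RHS]big_mkcond /=;
    by apply: eq_bigr => v _; rewrite ?inE; case: (v \in S); rewrite ?mulr1 ?mulr0.
rewrite /pair_mean (eq_bigr _ (fun u _ => innerE u)) (bigID (mem S)) /=.
rewrite [X in X + _](eq_bigr (fun u => wprob w u * pSc)) => [|u /= ->] //.
rewrite [X in _ + X](eq_bigr (fun u => wprob w u * pS)) => [|u /= /negbTE -> //].
rewrite [X in _ + X](eq_bigl (fun u => u \in ~: S)); last by move=> u; rewrite inE.
rewrite -[X in X + _]mulr_suml -[X in _ + X]mulr_suml -/pS -/pSc.
by rewrite [pSc * _]mulrC -mulr2n mulr_natl.
Qed.

End PairMean.

Section Graph.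
Variables (R : realType) (V : finType) (e : rel V).

Lemma eq_edge_mean (F G : V -> V -> R) :
  (forall x y, e x y -> F x y = G x y) -> edge_mean e F = edge_mean e G.
Proof. by move=> FG; rewrite /edge_mean; congr (_ / _); apply: eq_bigr => p /FG. Qed.

Lemma edge_meanD (F G : V -> V -> R) :
  edge_mean e (fun x y => F x y + G x y) = edge_mean e F + edge_mean e G.
Proof. by rewrite /edge_mean big_split mulrDl. Qed.

Lemma edge_meanZ (c : R) (F : V -> V -> R) :
  edge_mean e (fun x y => c * F x y) = c * edge_mean e F.
Proof. by rewrite /edge_mean -mulr_sumr mulrA. Qed.

Lemma edge_mean_sum (I : finType) (F : I -> V -> V -> R) :
  edge_mean e (fun x y => \sum_i F i x y) = \sum_i edge_mean e (F i).
Proof. by rewrite /edge_mean exchange_big mulr_suml. Qed.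

Lemma arc_sum_fst (A : V -> R) :
  \sum_(p : V * V | e p.1 p.2) A p.1 = \sum_x deg e x * A x.
Proof.
rewrite -(pair_big_dep xpredT (fun x y => e x y) (fun x _ => A x)) /=.
apply: eq_bigr => x _; rewrite (eq_bigl (fun y => y \in [set y | e x y])).
  by rewrite sumr_const /deg mulr_natl.
by move=> y; rewrite inE.
Qed.

Lemma card_arcs : (#|[set p : V * V | e p.1 p.2]|)%:R = \sum_x deg e x :> R.
Proof.
rewrite -sum1_card natr_sum (eq_bigl (fun p : V * V => e p.1 p.2)) => [|p].
  by rewrite (arc_sum_fst (fun _ => 1)); apply: eq_bigr => x _; rewrite mulr1.
by rewrite inE.
Qed.

Lemma edge_mean_fst (H : V -> R) :
  edge_mean e (fun x _ => H x) = \sum_x wprob (deg e) x * H x.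
Proof.
rewrite /edge_mean arc_sum_fst card_arcs mulr_suml.
by apply: eq_bigr => x _; rewrite mulrAC.
Qed.

Lemma vol_add_setC (S : {set V}) : vol e S + vol e (~: S) = \sum_x deg e x :> R.
Proof.
rewrite /vol [RHS](bigID (mem S)) /=; congr (_ + _).
by apply: eq_bigl => x; rewrite inE.
Qed.

Lemma sum_wprob_deg (S : {set V}) :
  \sum_(u in S) wprob (deg e) u = vol e S / \sum_x deg e x :> R.
Proof. by rewrite /vol mulr_suml. Qed.

End Graph.

Section SymmetricGraph.
Variables (R : realType) (V : finType) (e : rel V).
Hypothesis e_sym : forall x y, e x y = e y x.

Lemma arc_sum_swap (F : V -> V -> R) :
  \sum_(p : V * V | e p.1 p.2) F p.1 p.2 = \sum_(p : V * V | e p.1 p.2) F p.2 p.1.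
Proof.
rewrite (reindex_inj (h := fun p : V * V => (p.2, p.1))) /=.
  by apply: eq_bigl => p; rewrite e_sym.
by move=> [a b] [c d] /= [-> ->].
Qed.

Lemma edge_mean_avg (H : V -> R) :
  edge_mean e (fun x y => (H x + H y) / 2) = \sum_x wprob (deg e) x * H x.
Proof.
have sndE : edge_mean e (fun _ y => H y) = edge_mean e (fun x _ => H x).
  by rewrite /edge_mean (arc_sum_swap (fun _ y => H y)).
rewrite (@eq_edge_mean _ _ _ _ (fun x y => 2^-1 * H x + 2^-1 * H y)).
  by rewrite edge_meanD !edge_meanZ sndE edge_mean_fst; lra.
by move=> x y _; lra.
Qed.

Lemma edge_mean_cut (S : {set V}) :
  edge_mean e (fun x y => ((x \in S) != (y \in S))%:R)
  = 2 * cut_size e S / \sum_x deg e x :> R.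
Proof.
have cutE : cut_size e S
    = \sum_(p : V * V | e p.1 p.2) ((p.1 \in S) && (p.2 \notin S))%:R :> R.
  rewrite /cut_size -sum1_card natr_sum [RHS]big_mkcond [LHS]big_mkcond /=.
  apply: eq_bigr => p _; rewrite inE.
  by case: (e p.1 p.2); case: (p.1 \in S); case: (p.2 \in S).
rewrite /edge_mean card_arcs; congr (_ / _).
rewrite mulr2n mulrDl mul1r cutE.
rewrite {1}(arc_sum_swap (fun x y => ((x \in S) && (y \notin S))%:R)) -big_split /=.
by apply: eq_bigr => p _; case: (p.1 \in S); case: (p.2 \in S); rewrite /= ?addr0 ?add0r.
Qed.

Lemma expander_level_set (alpha : R) (S : {set V}) :
  0 <= alpha -> expander e alpha ->
  alpha * pair_mean (deg e) (fun u v => ((u \in S) != (v \in S))%:R)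
  <= edge_mean e (fun x y => ((x \in S) != (y \in S))%:R).
Proof.
move=> alpha_ge0 /(_ S) cut_ge; rewrite pair_mean_sep edge_mean_cut !sum_wprob_deg.
rewrite -(vol_add_setC R e S) in cut_ge *.
have vol_ge0 T : 0 <= vol e T :> R by apply: sumr_ge0 => x _; exact: ler0n.
move: (vol_ge0 S) (vol_ge0 (~: S)) cut_ge.
set a := vol e S; set b := vol e (~: S); set c := cut_size e S => a_ge0 b_ge0 cut_ge.
have [->|ab_neq0] := eqVneq (a + b) 0; first by rewrite invr0 !mulr0.
(* a b <= min a b * (a + b) *)
have key : alpha * (a * b) <= c * (a + b).
  by move: cut_ge; rewrite minEle; case: ifP => _; nra.
have -> : 2 * c / (a + b) = 2 * (c * (a + b)) / (a + b) / (a + b) by field.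
have -> : alpha * (2 * (a / (a + b) * (b / (a + b))))
    = 2 * (alpha * (a * b)) / (a + b) / (a + b) by field.
have ab_gt0 : 0 < a + b by rewrite lt_def ab_neq0 addr_ge0.
by rewrite !ler_pM2r ?invr_gt0 // ler_pM2l.
Qed.

Lemma expander_poincare (alpha : R) (K : int -> R) (d : V -> int) :
  {homo K : a b / a <= b} -> 0 <= alpha -> expander e alpha ->
  alpha * pair_mean (deg e) (fun u v => `|K (d u) - K (d v)|)
  <= edge_mean e (fun x y => `|K (d x) - K (d y)|).
Proof.
move=> K_homo alpha_ge0 expd.
pose B := (\max_v `|d v|)%N.
have d_in v : - B%:Z <= d v <= - B%:Z + (B + B)%N%:Z.
  by have := @leq_bigmax _ (fun v => `|d v|%N) v; lia.
pose level (k : 'I_(B + B)) := [set v | - B%:Z + k%:Z < d v].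
pose jump (k : 'I_(B + B)) := K (- B%:Z + k.+1%:Z) - K (- B%:Z + k%:Z).
have coareaE x y :
    `|K (d x) - K (d y)| = \sum_k jump k * ((x \in level k) != (y \in level k))%:R.
  rewrite (coarea_int K_homo (d_in x) (d_in y)); apply: eq_bigr => k _.
  by rewrite !inE mulrC.
rewrite (eq_pair_mean _ coareaE) (eq_edge_mean (fun x y _ => coareaE x y)).
rewrite pair_mean_sum edge_mean_sum mulr_sumr; apply: ler_sum => k _.
rewrite pair_meanZ edge_meanZ mulrCA; apply: ler_wpM2l; last exact: expander_level_set.
by rewrite subr_ge0 K_homo // lerD2l lez_nat.
Qed.

Lemma edge_mean_min_le (beta : R) (H : V -> R) : \sum_x deg e x != 0 :> R ->
  beta * pair_mean (deg e) (fun u v => `|H u - H v|)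
    <= edge_mean e (fun x y => `|H x - H y|) ->
  edge_mean e (fun x y => Num.min (H x) (H y))
  <= pair_mean (deg e) (fun u v =>
       (1 - beta) / 2 * (H u + H v) + beta * Num.min (H u) (H v)).
Proof.
move=> deg_neq0 poincare.
have minE (a b : R) : Num.min a b = (a + b) / 2 + (- 2^-1) * `|a - b|.
  by case: (lerP a b) => _; lra.
rewrite (eq_edge_mean (fun x y _ => minE (H x) (H y))).
rewrite edge_meanD edge_meanZ edge_mean_avg.
rewrite (@eq_pair_mean _ _ _ _
  (fun u v => (H u + H v) / 2 + (- (beta / 2)) * `|H u - H v|)).
  by rewrite pair_meanD pair_meanZ pair_mean_avg //; lra.
by move=> u v; rewrite minE; lra.
Qed.

Lemma expander_edge_mean_min_le (alpha : R) (K : int -> R) (d : V -> int) :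
  {homo K : a b / a <= b} \/ {homo K : a b /~ a <= b} ->
  \sum_x deg e x != 0 :> R -> 0 <= alpha -> expander e alpha ->
  edge_mean e (fun x y => Num.min (K (d x)) (K (d y)))
  <= pair_mean (deg e) (fun u v =>
       (1 - alpha) / 2 * (K (d u) + K (d v)) + alpha * Num.min (K (d u)) (K (d v))).
Proof.
move=> [K_homo|K_anti] deg_neq0 alpha_ge0 expd; apply: edge_mean_min_le => //.
  exact: expander_poincare.
have normNN (a b : R) : `|- a - - b| = `|a - b| by rewrite -opprD normrN.
have := @expander_poincare alpha (fun z => - K z) d.
rewrite (eq_pair_mean _ (fun u v => normNN _ _)).
rewrite (eq_edge_mean (fun x y _ => normNN _ _)).
by apply=> // a b ab; rewrite lerN2 K_anti.
Qed.

End SymmetricGraph.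

Section GreedyStep.
Variables (R : realType) (V : finType).

Lemma Phi_step (lam : R) (d : V -> int) (x y : V) : x != y ->
  Phi lam (step d x y) - Phi lam d
  = (ch lam (d (hi d x y) - 1) - ch lam (d (hi d x y)))
    + (ch lam (d (lo d x y) + 1) - ch lam (d (lo d x y))).
Proof.
move=> xy; have hi_neq_lo : hi d x y != lo d x y.
  by rewrite /hi /lo; case: ifP => _; rewrite // eq_sym.
rewrite /Phi -sumrB (bigD1 (hi d x y)) //= (bigD1 (lo d x y)) 1?eq_sym //=.
rewrite big1 => [|v /andP[v_neq_hi v_neq_lo]]; last first.
  by rewrite /step (negbTE v_neq_hi) (negbTE v_neq_lo) subr0 addr0 subrr.
by rewrite /step eqxx (negbTE hi_neq_lo) eq_sym (negbTE hi_neq_lo) eqxx subr0 addr0 addr0.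
Qed.

Lemma hi_anti_min (K : int -> R) (d : V -> int) (x y : V) :
  {homo K : a b /~ a <= b} -> K (d (hi d x y)) = Num.min (K (d x)) (K (d y)).
Proof.
by move=> K_anti; rewrite /hi; case: lerP => [/K_anti/min_l|/ltW/K_anti/min_r].
Qed.

Lemma lo_homo_min (K : int -> R) (d : V -> int) (x y : V) :
  {homo K : a b / a <= b} -> K (d (lo d x y)) = Num.min (K (d x)) (K (d y)).
Proof.
by move=> K_homo; rewrite /lo; case: lerP => [/K_homo/min_r|/ltW/K_homo/min_l].
Qed.

Lemma expected_change_split (e : rel V) (lam : R) (d : V -> int) :
  irreflexive e -> expected_change e lam d = Delta_m1 e lam d + Delta_p1 e lam d.
Proof.
move=> e_irr; rewrite -edge_meanD; apply: eq_edge_mean => x y exy.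
by apply: Phi_step; apply: contraTneq exy => ->; rewrite e_irr.
Qed.

End GreedyStep.

Theorem mainTheorem3 (R : realType) (V : finType) (e : rel V) (alpha lam : R)
    (d : V -> int) :
  simple_graph e ->
  (exists x y, e x y) ->
  0 <= alpha <= 1 ->
  expander e alpha ->
  0 < lam < 1 ->
  reachable e d ->
  [/\ Delta_m1 e lam d <= tDelta_m1 (deg e) alpha lam d,
      Delta_p1 e lam d <= tDelta_p1 (deg e) alpha lam d &
      expected_change e lam d <=
        tDelta_m1 (deg e) alpha lam d + tDelta_p1 (deg e) alpha lam d].
Proof.
move=> [e_sym e_irr] [x0 [y0 e_x0y0]] /andP[alpha_ge0 _] expd _ _.
have deg_neq0 : \sum_x deg e x != 0 :> R.
  rewrite -card_arcs pnatr_eq0 -lt0n; apply/card_gt0P.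
  by exists (x0, y0); rewrite inE.
pose f z := ch lam (z - 1) - ch lam z; have f_anti := @ch_decrement_anti R lam.
pose g z := ch lam (z + 1) - ch lam z; have g_homo := @ch_increment_homo R lam.
have m1 : Delta_m1 e lam d <= tDelta_m1 (deg e) alpha lam d.
  have -> : tDelta_m1 (deg e) alpha lam d = pair_mean (deg e) (fun u v =>
      (1 - alpha) / 2 * (f (d u) + f (d v)) + alpha * Num.min (f (d u)) (f (d v))).
    by apply: eq_pair_mean => u v; rewrite -hi_anti_min.
  rewrite /Delta_m1 (eq_edge_mean (fun x y _ => hi_anti_min d x y f_anti)).
  by apply: expander_edge_mean_min_le => //; right.
have p1 : Delta_p1 e lam d <= tDelta_p1 (deg e) alpha lam d.
  have -> : tDelta_p1 (deg e) alpha lam d = pair_mean (deg e) (fun u v =>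
      (1 - alpha) / 2 * (g (d u) + g (d v)) + alpha * Num.min (g (d u)) (g (d v))).
    by apply: eq_pair_mean => u v; rewrite -lo_homo_min // [g (d u) + _]addrC.
  rewrite /Delta_p1 (eq_edge_mean (fun x y _ => lo_homo_min d x y g_homo)).
  by apply: expander_edge_mean_min_le => //; left.
split=> //; rewrite expected_change_split; first exact: lerD.
by move=> x; apply/negbTE.
Qed.
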